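(* For all integers $n$ and $\alpha$ with $n<\alpha\le 2^n$, there exists a minimal $n$-state nondeterministic finite automaton accepting a prefix-closed language whose equivalent minimal deterministic finite automaton has exactly $\alpha$ states. Moreover, if a minimal $n$-state nondeterministic finite automaton accepts a prefix-closed language whose equivalent minimal deterministic finite automaton has exactly $n$ states, then $n=1$.
   Context: NFAs have a single initial state and a transition function $\delta:Q\times\Sigma\to 2^Q$ that may map to the empty set (no sink state is needed or counted); DFAs are complete, so a sink state is counted. A minimal $n$-state NFA is an NFA with $n$ states such that no NFA with fewer states accepts the same language. A language $L\subseteq\Sigma^*$ is prefix-closed if $xy\in L$ implies $x\in L$ for all $x,y\in\Sigma^*$. *)

From mathcomp Require Import all_boot.
Set Implicit Arguments. Unset Strict Implicit. Unset Printing Implicit Defensive.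

Definition lang (Sigma : finType) := seq Sigma -> Prop.

Definition prefix_closed (Sigma : finType) (L : lang Sigma) : Prop :=
  forall x y : seq Sigma, L (x ++ y) -> L x.

(* NFA: single initial state, transition function Q x Sigma -> 2^Q
   (possibly empty, no sink needed). Number of states = #|nfa_state|. *)
Record nfa (Sigma : finType) := Nfa {
  nfa_state : finType;
  nfa_init : nfa_state;
  nfa_final : {set nfa_state};
  nfa_trans : nfa_state -> Sigma -> {set nfa_state} }.

Fixpoint nfa_reach (Sigma : finType) (A : nfa Sigma) (X : {set nfa_state A})
    (w : seq Sigma) : {set nfa_state A} :=
  match w with
  | [::] => X
  | a :: w' => nfa_reach (\bigcup_(q in X) nfa_trans q a) w'
  end.

Definition nfa_accept (Sigma : finType) (A : nfa Sigma) (w : seq Sigma) : bool :=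
  nfa_reach [set nfa_init A] w :&: nfa_final A != set0.

Definition nfa_accepts (Sigma : finType) (A : nfa Sigma) (L : lang Sigma) : Prop :=
  forall w, nfa_accept A w <-> L w.

(* Complete DFA (a sink state, if any, is counted). *)
Record dfa (Sigma : finType) := Dfa {
  dfa_state : finType;
  dfa_init : dfa_state;
  dfa_final : {set dfa_state};
  dfa_trans : dfa_state -> Sigma -> dfa_state }.

Definition dfa_accept (Sigma : finType) (D : dfa Sigma) (w : seq Sigma) : bool :=
  foldl (@dfa_trans Sigma D) (dfa_init D) w \in dfa_final D.

Definition dfa_accepts (Sigma : finType) (D : dfa Sigma) (L : lang Sigma) : Prop :=
  forall w, dfa_accept D w <-> L w.

Definition min_nfa_states (Sigma : finType) (L : lang Sigma) (n : nat) : Prop :=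
  (exists A : nfa Sigma, nfa_accepts A L /\ #|nfa_state A| = n) /\
  (forall B : nfa Sigma, nfa_accepts B L -> n <= #|nfa_state B|).

Definition min_dfa_states (Sigma : finType) (L : lang Sigma) (m : nat) : Prop :=
  (exists D : dfa Sigma, dfa_accepts D L /\ #|dfa_state D| = m) /\
  (forall E : dfa Sigma, dfa_accepts E L -> m <= #|dfa_state E|).

From mathcomp Require Import all_boot.
From Stdlib Require Import Classical_Prop.
Set Implicit Arguments. Unset Strict Implicit. Unset Printing Implicit Defensive.

(* For n < alpha <= 2^n, take states 0..n-1 (all accepting, 0 initial) and a
   family R of alpha subsets of them containing the empty set and all
   singletons; a letter Y (for each Y in R) leads from 0 to Y, and a letter i
   loops on i.  The sets reachable from {0} are exactly the members of R,
   which are pairwise distinguished by the letters i, and the pairs of words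
   (Y = {i}, i) form a fooling set of size n.
   Conversely, if L is prefix-closed and neither empty nor universal, the
   state reached by a word outside L is a dead state of the minimal DFA that
   differs from its initial state; deleting it leaves an NFA with one state
   fewer, so the minimal NFA is strictly smaller than the minimal DFA; the
   empty and the universal language have 1-state NFAs. *)

Section NfaReach.
Variables (Sigma : finType) (A : nfa Sigma).
Local Notation Q := (nfa_state A).

Definition nfa_step (X : {set Q}) (a : Sigma) : {set Q} :=
  \bigcup_(q in X) nfa_trans q a.

Definition nfa_accept_from (q : Q) (w : seq Sigma) : bool :=
  nfa_reach [set q] w :&: nfa_final A != set0.

Lemma nfa_reach_cons (X : {set Q}) a w :
  nfa_reach X (a :: w) = nfa_reach (nfa_step X a) w.
Proof. by []. Qed.

Lemma nfa_reach_cat (X : {set Q}) u v :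
  nfa_reach X (u ++ v) = nfa_reach (nfa_reach X u) v.
Proof. by elim: u X => //= a u IH X. Qed.

Lemma nfa_reach0 w : nfa_reach (set0 : {set Q}) w = set0.
Proof. by elim: w => //= a w IH; rewrite big_set0. Qed.

Lemma nfa_reachS (X Y : {set Q}) w :
  X \subset Y -> nfa_reach X w \subset nfa_reach Y w.
Proof.
elim: w X Y => //= a w IH X Y sXY; apply: IH.
apply/subsetP=> p /bigcupP[q qX pq]; apply/bigcupP.
by exists q; rewrite ?(subsetP sXY).
Qed.

Lemma nfa_reach_set1 (X : {set Q}) w p :
  p \in nfa_reach X w -> exists2 q, q \in X & p \in nfa_reach [set q] w.
Proof.
elim: w X => [|a w IH] X /=; first by exists p; rewrite ?set11.
move=> /IH[r /bigcupP[q qX rq] pr]; exists q => //.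
by apply: subsetP (nfa_reachS w _) _ pr; rewrite big_set1 sub1set.
Qed.

Lemma nfa_accept_cat x y :
  nfa_accept A (x ++ y) =
  [exists q, (q \in nfa_reach [set nfa_init A] x) && nfa_accept_from q y].
Proof.
rewrite /nfa_accept nfa_reach_cat; apply/set0Pn/existsP.
  move=> [p /setIP[/nfa_reach_set1[q qx pq] pF]]; exists q; rewrite qx.
  by apply/set0Pn; exists p; rewrite inE pq.
move=> [q /andP[qx /set0Pn[p /setIP[pq pF]]]]; exists p; rewrite inE pF andbT.
by apply: subsetP (nfa_reachS _ _) _ pq; rewrite sub1set.
Qed.

Lemma nfa_all_final_prefix_closed :
  nfa_final A = setT -> prefix_closed (fun w => nfa_accept A w).
Proof.
rewrite /nfa_accept => -> u v; rewrite !setIT nfa_reach_cat.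
by apply: contra_neq => ->; apply: nfa_reach0.
Qed.

Lemma nfa_fooling_set (I : finType) (x y : I -> seq Sigma) (L : lang Sigma) :
  (forall i j, L (x i ++ y j) <-> i = j) -> nfa_accepts A L -> #|I| <= #|Q|.
Proof.
move=> xyL AL.
have /fin_all_exists[f fP] i :
    exists q, (q \in nfa_reach [set nfa_init A] (x i)) && nfa_accept_from q (y i).
  by apply/existsP; rewrite -nfa_accept_cat; apply/AL/xyL.
suff f_inj : injective f by apply: leq_card f_inj.
move=> i j fij; apply/xyL/AL; rewrite nfa_accept_cat; apply/existsP; exists (f i).
by have /andP[-> _] := fP i; have /andP[_] := fP j; rewrite fij.
Qed.

Section SubsetConstruction.
Variable R : {set {set Q}}.
Hypothesis R_init : [set nfa_init A] \in R.
Hypothesis R_step : forall X a, X \in R -> nfa_step X a \in R.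

Definition subset_dfa : dfa Sigma :=
  @Dfa Sigma {X | X \in R} (exist (fun X => X \in R) _ R_init)
    [set X | val X :&: nfa_final A != set0]
    (fun X a => exist (fun X => X \in R) _ (R_step a (valP X))).

Lemma subset_dfa_run X w :
  val (foldl (@dfa_trans _ subset_dfa) X w) = nfa_reach (val X) w.
Proof. by elim: w X => //= a w IH X; rewrite IH. Qed.

Lemma subset_dfa_accept w : dfa_accept subset_dfa w = nfa_accept A w.
Proof. by rewrite /dfa_accept inE subset_dfa_run. Qed.

End SubsetConstruction.
End NfaReach.

Lemma card_sig_set (T : finType) (R : {set T}) : #|{: {x | x \in R}}| = #|R|.
Proof. by rewrite card_sig; apply: eq_card. Qed.

Lemma superset_of_card (T : finType) (B : {set T}) k :
  #|B| <= k <= #|T| -> exists2 R : {set T}, B \subset R & #|R| = k.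
Proof.
elim: k => [|k IH] /andP[leBk lekT].
  by exists B => //; apply/eqP; rewrite -leqn0.
have [ltkB|leBk'] := ltnP k #|B|.
  by exists B => //; apply/eqP; rewrite eqn_leq leBk.
have [R sBR cR] := IH (introT andP (conj leBk' (ltnW lekT))).
have [p pR] : exists p, p \notin R.
  apply/existsP; rewrite -negb_forall; apply: contraL lekT => /forallP RT.
  rewrite -ltnNge ltnS -cR -cardsT subset_leq_card //.
  by apply/subsetP => p _; apply: RT.
by exists (p |: R); rewrite ?cardsU1 ?pR ?cR // (subset_trans sBR) ?subsetUr.
Qed.

Section DfaDeadState.
Variables (Sigma : finType) (D : dfa Sigma) (q0 : dfa_state D).
Local Notation run := (foldl (@dfa_trans Sigma D)).

Definition dfa_dead : Prop := forall w, run q0 w \notin dfa_final D.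

Hypothesis q0_dead : dfa_dead.

Definition prune_trans (s : {q | q != q0}) (a : Sigma) : {set {q | q != q0}} :=
  if insub (dfa_trans (val s) a) is Some t then [set t] else set0.

Definition prune_nfa (init : {q | q != q0}) : nfa Sigma :=
  Nfa init [set t | val t \in dfa_final D] prune_trans.

Lemma prune_accept_from init s w :
  @nfa_accept_from _ (prune_nfa init) s w = (run (val s) w \in dfa_final D).
Proof.
elim: w s => [|a w IH] s.
  apply/set0Pn/idP => [[t /setIP[/set1P-> ]]|sF]; first by rewrite inE.
  by exists s; rewrite !inE eqxx.
rewrite /nfa_accept_from /= big_set1 /prune_trans.
case: insubP => [t _ <-|/negbNE/eqP->]; first exact: IH.
by rewrite nfa_reach0 set0I eqxx (negbTE (q0_dead w)).
Qed.

Lemma nfa_prune_dead_state : dfa_init D != q0 ->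
  exists A : nfa Sigma, (forall w, nfa_accept A w = dfa_accept D w) /\
                        #|nfa_state A| = #|dfa_state D|.-1.
Proof.
move=> init_q0; exists (prune_nfa (Sub (dfa_init D) init_q0)); split.
  by move=> w; apply: prune_accept_from.
by rewrite /= card_sig -(cardC1 q0); apply: eq_card.
Qed.

End DfaDeadState.

Lemma prefix_closed_dead (Sigma : finType) (L : lang Sigma) (D : dfa Sigma) w0 :
  prefix_closed L -> dfa_accepts D L -> ~ L w0 ->
  dfa_dead (foldl (@dfa_trans _ D) (dfa_init D) w0).
Proof.
move=> Lpc DL Lw0 w; apply/negP => wF; apply/Lw0/(Lpc _ w)/DL.
by rewrite /dfa_accept foldl_cat.
Qed.

Lemma dfa_distinguishable (Sigma : finType) (L : lang Sigma) (D : dfa Sigma)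
    (I : finType) (x : I -> seq Sigma) :
  (forall i j, (forall y, L (x i ++ y) <-> L (x j ++ y)) -> i = j) ->
  dfa_accepts D L -> #|I| <= #|dfa_state D|.
Proof.
move=> x_dist DL.
pose f i := foldl (@dfa_trans _ D) (dfa_init D) (x i).
suff f_inj : injective f by apply: leq_card f_inj.
move=> i j fij; apply: x_dist => y.
by rewrite -!DL /dfa_accept !foldl_cat -/(f i) -/(f j) fij.
Qed.

Definition const_nfa (Sigma : finType) (b : bool) : nfa Sigma :=
  @Nfa Sigma unit tt (if b then setT else set0) (fun _ _ => setT).

Lemma const_nfa_accept (Sigma : finType) b (w : seq Sigma) :
  nfa_accept (const_nfa Sigma b) w = b.
Proof.
have reachT v : @nfa_reach _ (const_nfa Sigma b) setT v = setT.
  elim: v => //= a v IH.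
  rewrite -[in RHS]IH [X in nfa_reach X v](_ : _ = setT) //.
  by apply/setP => -[]; rewrite inE; apply/bigcupP; exists tt; rewrite ?inE.
rewrite /nfa_accept [X in nfa_reach X w](_ : _ = setT) ?reachT; last first.
  by apply/setP => -[]; rewrite !inE.
by case: {reachT} b; rewrite /= ?setIT ?setI0 ?eqxx //; apply/set0Pn; exists tt.
Qed.

Section BranchNfa.
Variable m : nat.
Local Notation N := m.+1.
Variable R : {set {set 'I_N}}.

Definition branch_sym : finType := ('I_N + {set 'I_N})%type.

Definition branch_trans (q : 'I_N) (a : branch_sym) : {set 'I_N} :=
  match a with
  | inl i => if q == i then [set i] else set0
  | inr Y => if (q == ord0) && (Y \in R) then Y else set0
  end.

Definition branch_nfa : nfa branch_sym :=
  @Nfa branch_sym 'I_N ord0 setT branch_trans.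

Local Notation branch_step := (@nfa_step _ branch_nfa).

Lemma branch_step_inl (X : {set 'I_N}) i :
  branch_step X (inl i) = if i \in X then [set i] else set0.
Proof.
apply/setP => p; apply/bigcupP/idP => [[q qX]|].
  by rewrite /= /branch_trans; case: eqP => [<-|]; rewrite ?qX ?inE.
case: ifP => [iX /set1P->|_]; last by rewrite inE.
by exists i; rewrite //= /branch_trans eqxx set11.
Qed.

Lemma branch_step_inr (X : {set 'I_N}) Y :
  branch_step X (inr Y) =
  if (ord0 \in X) && (Y \in R) then Y else set0.
Proof.
apply/setP => p; apply/bigcupP/idP => [[q qX]|].
  rewrite /= /branch_trans; case: eqP => [q0|]; last by rewrite inE.
  by rewrite -q0 qX; case: (Y \in R); rewrite ?inE.
case: ifP => [/andP[X0 YR] pY|]; last by rewrite inE.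
by exists ord0; rewrite //= /branch_trans YR.
Qed.

Lemma branch_accept_pair Y j : Y \in R ->
  nfa_accept branch_nfa [:: inr Y; inl j] = (j \in Y).
Proof.
move=> YR; rewrite /nfa_accept setIT !nfa_reach_cons branch_step_inr set11 YR.
rewrite branch_step_inl /=.
by case: ifP => _; rewrite ?eqxx //; apply/set0Pn; exists j; rewrite set11.
Qed.

Lemma branch_step_closed : set0 \in R -> (forall i, [set i] \in R) ->
  forall X a, X \in R -> branch_step X a \in R.
Proof.
move=> R0 R1 X [i|Y] XR; first by rewrite branch_step_inl; case: ifP; rewrite ?R1.
by rewrite branch_step_inr; case: ifP => // /andP[].
Qed.

End BranchNfa.

Lemma prefix_closed_min_dfa_size_realizable n alpha :
  0 < n -> n < alpha <= 2 ^ n ->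
  exists (Sigma : finType) (L : lang Sigma),
    [/\ prefix_closed L, min_nfa_states L n & min_dfa_states L alpha].
Proof.
case: n => // m _ /andP[lt_n_alpha le_alpha].
pose B : {set {set 'I_m.+1}} := set0 |: [set [set i] | i : 'I_m.+1].
have cardB : #|B| = m.+2.
  rewrite cardsU1 card_imset ?card_ord; last exact: set1_inj.
  by case: imsetP => // [[i _ /setP/(_ i)]]; rewrite !inE eqxx.
have [R sBR cardR] : exists2 R : {set {set 'I_m.+1}}, B \subset R & #|R| = alpha.
  apply: superset_of_card; rewrite cardB lt_n_alpha (leq_trans le_alpha) //.
  apply: leq_trans (max_card (mem (powerset [set: 'I_m.+1]))).
  by rewrite card_powerset cardsT card_ord.
have R0 : set0 \in R by rewrite (subsetP sBR) ?setU11.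
have R1 i : [set i] \in R by rewrite (subsetP sBR) // setU1r ?imset_f.
have R_step := branch_step_closed R0 R1.
exists (branch_sym m), (fun w => nfa_accept (branch_nfa R) w); split.
- exact: nfa_all_final_prefix_closed.
- split; first by exists (branch_nfa R); rewrite card_ord.
  move=> A; rewrite -[m.+1]card_ord; apply: (@nfa_fooling_set _ _ _
    (fun i => [:: inr [set i]]) (fun i => [:: inl i])) => i j.
  by rewrite branch_accept_pair // inE; split => [/eqP|->].
- split.
    exists (@subset_dfa _ (branch_nfa R) R (R1 ord0) R_step).
    by split=> [w|]; rewrite ?subset_dfa_accept ?card_sig_set.
  move=> E EL; rewrite -cardR -card_sig_set.
  apply: (@dfa_distinguishable _ _ _ _
    (fun X : {X | X \in R} => [:: inr (val X)]) _ EL) => X Y XY.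
  apply/val_inj/setP => j; rewrite -(branch_accept_pair j (valP X)).
  by rewrite -(branch_accept_pair j (valP Y)); apply/idP/idP => /XY.
Qed.

Lemma prefix_closed_min_nfa_eq_min_dfa (Sigma : finType) (L : lang Sigma) n :
  prefix_closed L -> min_nfa_states L n -> min_dfa_states L n -> n = 1.
Proof.
move=> Lpc [[A [AL <-]] Amin] [[D [DL Dn]] _].
have A_gt0 : 0 < #|nfa_state A| by apply/card_gt0P; exists (nfa_init A).
have [L_const|[w0 Lw0 L_nil]] : (exists b : bool, forall w, L w <-> b) \/
    exists2 w0, ~ L w0 & L [::].
  have [L_nil|L_nil] := classic (L [::]); last first.
    by left; exists false; split => // /(Lpc [::]).
  have [[w0 Lw0]|all_L] := classic (exists w0, ~ L w0); first by right; exists w0.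
  by left; exists true; split=> // _; apply: NNPP => Lw; apply: all_L; exists w.
- case: L_const => b Lb; apply/eqP; rewrite eqn_leq A_gt0 andbT.
  have -> : 1 = #|nfa_state (const_nfa Sigma b)| by rewrite card_unit.
  by apply: Amin => w; rewrite const_nfa_accept; apply: iff_sym.
- have init_ndead : dfa_init D != foldl (@dfa_trans _ D) (dfa_init D) w0.
    apply/eqP => init_w0; apply/Lw0/DL; rewrite /dfa_accept -init_w0.
    exact/(DL [::]).
  have [B [BD cardB]] :=
    nfa_prune_dead_state (prefix_closed_dead Lpc DL Lw0) init_ndead.
  have BL : nfa_accepts B L by move=> w; rewrite BD; apply: DL.
  have := Amin B BL.
  by rewrite cardB Dn; case: #|nfa_state A| A_gt0 => // k _; rewrite /= ltnn.
Qed.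

Theorem mainTheorem9 :
  (forall n alpha : nat, 0 < n -> n < alpha <= 2 ^ n ->
     exists (Sigma : finType) (L : lang Sigma),
       [/\ prefix_closed L, min_nfa_states L n & min_dfa_states L alpha]) /\
  (forall (Sigma : finType) (L : lang Sigma) (n : nat),
     prefix_closed L -> min_nfa_states L n -> min_dfa_states L n -> n = 1).
Proof.
split; [exact: prefix_closed_min_dfa_size_realizable
       | exact: prefix_closed_min_nfa_eq_min_dfa].
Qed.
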